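(* Consider the randomized matching algorithm on the helper graph $\mathcal{H}_i$ described in the context, executed in the V-CONGEST model on $G$ where each real node $x$ simulates all copies $x_{\mathcal{C}}$ in $\mathcal{H}_i$ of its type-1 and type-2 virtual nodes on layer $l$. In each round of this matching algorithm, each real edge of $G$ is used to transmit at most twice in each direction; consequently each round of the matching algorithm can be carried out in $O(\Delta)$ time slots.
   Context: $G=(V,E)$ is a finite undirected graph with maximum degree $\Delta$. Fix an integer $L$. The virtual graph $\mathcal{G}$ contains $3L$ copies of each $v\in V$: each lower layer $1,\dots,L$ contains one copy of every node; each upper layer $L+1,\dots,2L$ contains a type-1 copy and a type-2 copy of every node. Every copy of $v$ is adjacent to all other copies of $v$ and to all copies of each neighbor of $v$ in $G$. $\Psi$ maps virtual nodes to real nodes. There are classes $1,\dots,t$. For a fixed upper layer $l$, nodes of layers $1,\dots,l-1$ are old nodes, each assigned a class; a component of class $i$ is a connected component of the subgraph induced by old nodes of class $i$. The helper graph $\mathcal{H}_i[\mathcal{C}]$: for each type-2 node $v$ of layer $l$, a node $v_{\mathcal{C}}$ is added iff $\Psi(v)\notin\Psi(\mathcal{C})$, $v$ has a neighbor in $\mathcal{C}$, and $v$ has no neighbor in another component of class $i$; for each such $v_{\mathcal{C}}$ and each type-1 neighbor $w$ of $v$ on layer $l$ that has a neighbor in some component $\mathcal{C}'\neq\mathcal{C}$ of class $i$ but no neighbor in $\mathcal{C}$, a node $w_{\mathcal{C}}$ and the edge $\{v_{\mathcal{C}},w_{\mathcal{C}}\}$ are added. $\mathcal{H}_i$ is the disjoint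 union of the $\mathcal{H}_i[\mathcal{C}]$; its nodes $v_{\mathcal{C}}$ coming from type-2 nodes are called type-2 and those coming from type-1 nodes type-1, and every edge joins a type-2 and a type-1 node. Matching algorithm: a node of $\mathcal{H}_i$ is active iff none of its incident edges is matched, an edge is active iff both endpoints are active. In each round, every active type-2 node assigns random numbers from a sufficiently large range to its incident active edges, selects the edge with the largest number and sends this choice to its neighbors; every type-1 node that received at least one proposal picks the proposed edge with the largest number and adds it to the matching (informing the proposer); matched nodes and their edges become inactive. V-CONGEST model: in each time slot each real node may send one identical message of $O(\log n)$ bits to all its neighbors in $G$. *)

From mathcomp Require Import all_boot.
Set Implicit Arguments.
Unset Strict Implicit.
Unset Printing Implicit Defensive.

Section HelperGraph.

Variables (V : finType) (adj : rel V) (L : nat).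

Definition degree (x : V) : nat := #|[set y | adj x y]|.
Definition maxdeg : nat := \max_(x : V) degree x.

(* Virtual nodes: (v, j) with j < 3L.
   j <  L        : copy of v on lower layer j+1
   L <= j < 2L   : type-1 copy of v on upper layer j+1
   2L <= j < 3L  : type-2 copy of v on upper layer j-L+1 *)
Definition vnode := (V * 'I_(3 * L))%type.
Definition Psi (a : vnode) : V := a.1.
Definition vlayer (a : vnode) : nat :=
  let j := val a.2 in if j < 2 * L then j.+1 else j - L + 1.
Definition is_type1 (a : vnode) : bool := (L <= val a.2) && (val a.2 < 2 * L).
Definition is_type2 (a : vnode) : bool := 2 * L <= val a.2.
Definition vadj (a b : vnode) : bool :=
  (a != b) && ((Psi a == Psi b) || adj (Psi a) (Psi b)).

(* classes 0..t-1 (the paper's 1..t), class assignment of the old nodes,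
   fixed upper layer l, fixed class i *)
Variables (t : nat) (cls : vnode -> 'I_t) (l : nat) (i : 'I_t).

Definition old (a : vnode) : bool := vlayer a < l.
Definition inS (a : vnode) : bool := old a && (cls a == i).
Definition crel : rel vnode := fun a b => [&& inS a, inS b & vadj a b].
Definition comp (a : vnode) : {set vnode} := [set b | connect crel a b].
Definition comps : {set {set vnode}} := [set comp a | a : vnode & inS a].

Definition nbr_in (a : vnode) (C : {set vnode}) : bool := [exists u in C, vadj a u].

(* nodes of H_i: pairs (v, C) standing for v_C *)
Definition hnode := (vnode * {set vnode})%type.
(* edges of H_i: (type-2 endpoint, type-1 endpoint) *)
Definition hedge := (hnode * hnode)%type.

Definition T2node (p : hnode) : bool :=
  let: (v, C) := p in
  [&& is_type2 v, vlayer v == l, C \in comps,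
      Psi v \notin [set Psi u | u in C], nbr_in v C &
      [forall C' in comps, (C' != C) ==> ~~ nbr_in v C']].

Definition Hedge (e : hedge) : bool :=
  let: ((v, C), (w, C2)) := e in
  [&& T2node (v, C), C2 == C, is_type1 w, vlayer w == l, vadj v w,
      [exists C' in comps, (C' != C) && nbr_in w C'] & ~~ nbr_in w C].

Definition incident (e : hedge) (x : hnode) : bool := (e.1 == x) || (e.2 == x).

Definition is_matching (M : {set hedge}) : Prop :=
  (forall e, e \in M -> Hedge e) /\
  (forall e1 e2, e1 \in M -> e2 \in M -> e1 != e2 ->
     (e1.1 != e2.1) && (e1.2 != e2.2)).

Variable (M : {set hedge}).
Definition active_node (x : hnode) : bool := [forall e in M, ~~ incident e x].
Definition active_edge (e : hedge) : bool :=
  [&& Hedge e, active_node e.1 & active_node e.2].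

(* r : the random numbers assigned to the edges in this round;
   prop x : the edge selected (proposed) by the type-2 node x, if any *)
Definition valid_prop (r : hedge -> nat) (prop : hnode -> option hedge) : Prop :=
  forall x, match prop x with
    | Some e => [/\ T2node x, active_node x, e.1 == x, active_edge e &
                   forall e', active_edge e' -> e'.1 == x -> r e' <= r e]
    | None => ~~ T2node x \/ ~~ active_node x \/
              (forall e', active_edge e' -> e'.1 != x)
    end.

Definition proposed (prop : hnode -> option hedge) (e : hedge) : bool :=
  prop e.1 == Some e.

(* acc y : the proposed edge picked (and added to the matching) by the
   type-1 node y, if it received at least one proposal *)
Definition valid_acc (r : hedge -> nat) (prop acc : hnode -> option hedge) : Prop :=
  forall y, match acc y with
    | Some e => [/\ e.2 == y, proposed prop e &
                   forall e', proposed prop e' -> e'.2 == y -> r e' <= r e]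
    | None => forall e', proposed prop e' -> e'.2 != y
    end.

(* message (false, x): the proposal (choice) of the type-2 node x, sent to all
   its neighbours in H_i;  message (true, y): the notification by the type-1
   node y to the proposer of the edge y added to the matching.  A message is
   transmitted over the real edge (a, b) iff it is sent by a copy simulated by
   a to a copy simulated by b. *)
Definition msg := (bool * hnode)%type.

Definition transmits (prop acc : hnode -> option hedge) (a b : V) (m : msg) : bool :=
  let: (k, x) := m in
  if k then (Psi x.1 == a) && [exists e, (acc x == Some e) && (Psi e.1.1 == b)]
  else [&& Psi x.1 == a, prop x != None &
          [exists e, [&& Hedge e, e.1 == x & Psi e.2.1 == b]]].

Definition sends (prop acc : hnode -> option hedge) (a : V) (m : msg) : bool :=
  [exists b, adj a b && transmits prop acc a b m].

Definition vcongest_schedule (prop acc : hnode -> option hedge) (k : nat)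
    (slot : msg -> nat) : Prop :=
  [/\ forall a m, sends prop acc a m -> slot m < k,
      forall a m1 m2, sends prop acc a m1 -> sends prop acc a m2 ->
        slot m1 = slot m2 -> m1 = m2 &
      forall a b x y, sends prop acc a (false, x) -> sends prop acc b (true, y) ->
        slot (false, x) < slot (true, y)].

End HelperGraph.

(** On an upper layer every real node has exactly one type-1 and one type-2
    copy, and a type-2 copy [v] lies in at most one helper node [v_C], since
    [v] may neighbour only one component of class [i].  Hence a real node [a]
    simulates at most one proposer, and at most one notifier that can address
    a copy simulated by a given neighbour [b]: over a real edge travel at most
    one proposal and one notification.  A schedule of length [Δ + 1 <= 2Δ]
    sends all proposals in slot 0 and the notification of [a] to its [k]-th
    neighbour in slot [k + 1]. *)

From mathcomp Require Import all_boot zify.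
Set Implicit Arguments.
Unset Strict Implicit.
Unset Printing Implicit Defensive.

Section Copies.
Variables (V : finType) (L : nat).
Implicit Types u : vnode V L.

Lemma vnode_eq u1 u2 : Psi u1 = Psi u2 -> val u1.2 = val u2.2 -> u1 = u2.
Proof. by case: u1 u2 => [x1 j1] [x2 j2] /= -> /val_inj ->. Qed.

Lemma type1_copy_uniq u1 u2 : Psi u1 = Psi u2 -> is_type1 u1 -> is_type1 u2 ->
  vlayer u1 = vlayer u2 -> u1 = u2.
Proof.
rewrite /is_type1 /vlayer => eP h1 h2 el; apply: vnode_eq => //.
by move: h1 h2 el; do 2!case: ifP; lia.
Qed.

Lemma type2_copy_uniq u1 u2 : Psi u1 = Psi u2 -> is_type2 u1 -> is_type2 u2 ->
  vlayer u1 = vlayer u2 -> u1 = u2.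
Proof.
rewrite /is_type2 /vlayer => eP h1 h2 el; apply: vnode_eq => //.
by move: h1 h2 el; do 2!case: ifP; lia.
Qed.

End Copies.

Section HelperNodes.
Variables (V : finType) (adj : rel V) (L t : nat).
Variables (cls : vnode V L -> 'I_t) (l : nat) (i : 'I_t).

Local Notation T2node := (T2node adj cls l i).

Lemma T2node_comp_uniq v C1 C2 : T2node (v, C1) -> T2node (v, C2) -> C1 = C2.
Proof.
case/and5P=> _ _ _ _ /andP[_ /forallP only1] /and5P[_ _ C2comp _ /andP[nbr2 _]].
apply/eqP; apply: contraT => neqC.
by have := only1 C2; rewrite C2comp eq_sym neqC nbr2.
Qed.

Lemma T2node_uniq x1 x2 : T2node x1 -> T2node x2 -> Psi x1.1 = Psi x2.1 -> x1 = x2.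
Proof.
case: x1 x2 => [v1 C1] [v2 C2] h1 h2 /= eP.
have [t1 /eqP l1 _] := and3P h1; have [t2 /eqP l2 _] := and3P h2.
have ev : v1 = v2 by apply: type2_copy_uniq; rewrite ?l1 ?l2.
by subst v2; rewrite (T2node_comp_uniq h1 h2).
Qed.

Variables (M : {set hedge V L}) (r : hedge V L -> nat).
Variables (prop acc : hnode V L -> option (hedge V L)).
Hypotheses (vprop : valid_prop adj cls l i M r prop) (vacc : valid_acc r prop acc).

Local Notation transmits := (transmits adj cls l i prop acc).
Local Notation sends := (sends adj cls l i prop acc).

Lemma proposer_T2node x : prop x != None -> T2node x.
Proof. by move: (vprop x); case: (prop x) => // e []. Qed.

Lemma notifier_spec y e : acc y = Some e ->
  [/\ is_type1 y.1, vlayer y.1 = l, T2node e.1 & y.2 = e.1.2].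
Proof.
move=> accy; move: (vacc y); rewrite accy => -[/eqP e2y /eqP prope _].
move: (vprop e.1); rewrite prope => -[_ _ _ /and3P[he _ _] _].
by case: e he e2y {accy prope} => [[v C] [w C2]] /and5P[hT /eqP -> t1 /eqP l1 _] <-.
Qed.

Lemma notifier_uniq y1 y2 e1 e2 : acc y1 = Some e1 -> acc y2 = Some e2 ->
  Psi y1.1 = Psi y2.1 -> Psi e1.1.1 = Psi e2.1.1 -> y1 = y2.
Proof.
move=> /notifier_spec[t1 l1 T1 eC1] /notifier_spec[t2 l2 T2 eC2] eP eQ.
have ey : y1.1 = y2.1 by apply: type1_copy_uniq => //; rewrite l1 l2.
have ex : e1.1 = e2.1 by apply: T2node_uniq.
by case: y1 y2 ey eC1 eC2 {t1 t2 l1 l2 eP} => [? ?] [? ?] /= -> -> ->; rewrite ex.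
Qed.

Lemma transmits_tag_inj a b m1 m2 : transmits a b m1 -> transmits a b m2 ->
  m1.1 = m2.1 -> m1 = m2.
Proof.
case: m1 m2 => [k1 x1] [k2 x2] /= + + ek; subst k2; case: k1.
- move=> /andP[/eqP p1 /existsP[e1 /andP[/eqP h1 /eqP q1]]].
  move=> /andP[/eqP p2 /existsP[e2 /andP[/eqP h2 /eqP q2]]].
  by rewrite (notifier_uniq h1 h2) ?p1 ?p2 ?q1 ?q2.
- move=> /and3P[/eqP p1 /proposer_T2node T1 _] /and3P[/eqP p2 /proposer_T2node T2 _].
  by rewrite (T2node_uniq T1 T2) ?p1 ?p2.
Qed.

Lemma card_transmits_le2 a b : #|[set m | transmits a b m]| <= 2.
Proof.
have tag_inj : {in [set m | transmits a b m] &, injective (fun m : msg V L => m.1)}.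
  by move=> m1 m2; rewrite !inE; apply: transmits_tag_inj.
rewrite -(card_in_imset tag_inj).
by apply: leq_trans (max_card _) _; rewrite card_bool.
Qed.

Definition nbr_rank (a b : V) : nat := index b (enum [set z | adj a z]).

Lemma nbr_rank_lt a b : adj a b -> nbr_rank a b < maxdeg adj.
Proof.
move=> ab; apply: (@leq_trans (degree adj a)); last exact: leq_bigmax.
by rewrite /nbr_rank /degree cardE index_mem mem_enum inE.
Qed.

Lemma nbr_rank_inj a b1 b2 : adj a b1 -> adj a b2 ->
  nbr_rank a b1 = nbr_rank a b2 -> b1 = b2.
Proof.
move=> ab1 ab2 eq_rank.
have mem b : adj a b -> b \in enum [set z | adj a z] by rewrite mem_enum inE.
by rewrite -(nth_index b1 (mem _ ab1)) -/(nbr_rank a b1) eq_rank nth_index // mem.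
Qed.

Definition round_slot (m : msg V L) : nat :=
  if m is (true, y) then
    if acc y is Some e then (nbr_rank (Psi y.1) (Psi e.1.1)).+1 else 0
  else 0.

Lemma sends_source a k x : sends a (k, x) -> Psi x.1 = a.
Proof. by case/existsP=> b /andP[_]; case: k => [/andP[/eqP] | /and3P[/eqP]]. Qed.

Lemma sends_notification a y : sends a (true, y) ->
  exists e, [/\ acc y = Some e, adj a (Psi e.1.1) &
                round_slot (true, y) = (nbr_rank a (Psi e.1.1)).+1].
Proof.
move=> s; have src := sends_source s.
case/existsP: s => b /andP[ab /andP[_ /existsP[e /andP[/eqP acce /eqP eb]]]].
by exists e; rewrite /= acce eb src.
Qed.

Lemma round_slot_schedule : vcongest_schedule adj cls l i prop acc
  (2 * maxdeg adj) round_slot.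
Proof.
split.
- move=> a [k x] s; have [b /andP[ab _]] := existsP s.
  have := nbr_rank_lt ab; case: k s => s; last by rewrite /=; lia.
  have [e [_ ae ->]] := sends_notification s.
  by have := nbr_rank_lt ae; lia.
- move=> a [[] x1] [[] x2] s1 s2.
  + have [e1 [acc1 ae1 ->]] := sends_notification s1.
    have [e2 [acc2 ae2 ->]] := sends_notification s2.
    move=> [/(nbr_rank_inj ae1 ae2) eb].
    by rewrite (notifier_uniq acc1 acc2) ?(sends_source s1) ?(sends_source s2).
  + by have [e [_ _ ->]] := sends_notification s1.
  + by have [e [_ _ ->]] := sends_notification s2.
  + move=> _; have [b1 /andP[_ /and3P[_ /proposer_T2node T1 _]]] := existsP s1.
    have [b2 /andP[_ /and3P[_ /proposer_T2node T2 _]]] := existsP s2.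
    by rewrite (T2node_uniq T1 T2) ?(sends_source s1) ?(sends_source s2).
- by move=> a b x y _ s; have [e [_ _ ->]] := sends_notification s.
Qed.

End HelperNodes.

Theorem lemma9 (V : finType) (adj : rel V) (L t : nat)
    (cls : vnode V L -> 'I_t) (l : nat) (i : 'I_t)
    (M : {set hedge V L}) (r : hedge V L -> nat)
    (prop acc : hnode V L -> option (hedge V L)) :
  symmetric adj -> irreflexive adj ->
  L < l <= 2 * L ->
  is_matching adj cls l i M ->
  valid_prop adj cls l i M r prop ->
  valid_acc r prop acc ->
  (forall a b : V, adj a b ->
     #|[set m | transmits adj cls l i prop acc a b m]| <= 2) /\
  (exists slot : msg V L -> nat,
     vcongest_schedule adj cls l i prop acc (2 * maxdeg adj) slot).
Proof.
move=> _ _ _ _ vprop vacc; split.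
- by move=> a b _; apply: card_transmits_le2 vprop vacc a b.
- by exists (round_slot adj acc); apply: round_slot_schedule vprop vacc.
Qed.
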